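(* Let $K$ be a field, $I\subset R=K[x_1,\ldots,x_n]$ a monomial ideal and $W$ a weight over $R$. Then $I$ has the copersistence property if and only if the weighted ideal $I_W$ has the copersistence property.
   Context: An ideal $I$ in a commutative Noetherian ring $R$ has the copersistence property if $\mathrm{Ass}_R(R/I^k)\supseteq\mathrm{Ass}_R(R/I^{k+1})$ for all $k\ge1$. A weight over $R=K[x_1,\ldots,x_n]$ is a function $W:\{x_1,\ldots,x_n\}\to\mathbb{N}$ (positive integers); write $w_i=W(x_i)$. For a monomial ideal $I$, the weighted ideal $I_W$ is the ideal generated by $\{h(u): u \text{ a minimal monomial generator of } I\}$, where $h:R\to R$ is the $K$-algebra homomorphism with $h(x_i)=x_i^{w_i}$. *)

From HB Require Import structures.
From mathcomp Require Import all_boot all_order all_algebra.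
From mathcomp Require Import mpoly.
Set Implicit Arguments. Unset Strict Implicit. Unset Printing Implicit Defensive.
Import GRing.Theory.
Local Open Scope ring_scope.

Section Defs.
Variables (K : fieldType) (n : nat).
Local Notation R := {mpoly K[n]}.

Definition ideal_gen (S : R -> Prop) : R -> Prop :=
  fun p => exists r : seq (R * R),
    (forall x, x \in r -> S x.2) /\ p = \sum_(x <- r) x.1 * x.2.

Definition is_ideal (I : R -> Prop) : Prop :=
  I 0 /\ (forall a b, I a -> I b -> I (a + b)) /\ (forall a b, I b -> I (a * b)).

Definition is_prime_ideal (P : R -> Prop) : Prop :=
  is_ideal P /\ ~ P 1 /\ (forall a b, P (a * b) -> P a \/ P b).

Definition ideal_pow (I : R -> Prop) (k : nat) : R -> Prop :=
  ideal_gen (fun p => exists s : seq R,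
     size s = k /\ (forall q, q \in s -> I q) /\ p = \prod_(q <- s) q).

(* P is an associated prime of R/J: P is prime and P = (J : f) = Ann_R(f mod J). *)
Definition Ass (J : R -> Prop) (P : R -> Prop) : Prop :=
  is_prime_ideal P /\ exists f : R, forall g, P g <-> J (g * f).

Definition copersistent (I : R -> Prop) : Prop :=
  forall k : nat, (1 <= k)%N ->
    forall P, Ass (ideal_pow I k.+1) P -> Ass (ideal_pow I k) P.

Definition is_monomial (p : R) : Prop := exists m : 'X_{1..n}, p = 'X_[m].

Definition monomial_ideal (I : R -> Prop) : Prop :=
  forall p, I p <-> ideal_gen (fun q => I q /\ is_monomial q) p.

Definition min_mon_gen (I : R -> Prop) (m : 'X_{1..n}) : Prop :=
  I 'X_[m] /\
  forall m' : 'X_{1..n}, I 'X_[m'] -> (forall i, (m' i <= m i)%N) -> m' = m.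

Definition weight_hom (W : 'I_n -> nat) (p : R) : R :=
  comp_mpoly [tuple 'X_i ^+ W i | i < n] p.

Definition weighted_ideal (W : 'I_n -> nat) (I : R -> Prop) : R -> Prop :=
  ideal_gen (fun q => exists m, min_mon_gen I m /\ q = weight_hom W 'X_[m]).

End Defs.

From HB Require Import structures.
From mathcomp Require Import all_boot all_order all_algebra.
From mathcomp Require Import mpoly.
From mathcomp Require Import boolp zify.
Import GRing.Theory.
Local Open Scope ring_scope.

(* A monomial ideal J is determined by the upward-closed set D of exponents of
   its monomials, and every associated prime P = (J : f) of R/J is already a
   monomial colon (J : x^a); such a prime is generated by the variables x_i
   with x^(a + e_i) in J.  Weighting replaces D by its preimage under the
   componentwise floor division c |-> c / W, and (I_W)^k = (I^k)_W.  The colon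
   (J : x^a) equals (J_W : x^b) for b_i = W_i a_i + (W_i - 1) [x_i in P], and
   conversely (J_W : x^b) = (J : x^(b / W)).  Hence Ass(I^k) = Ass((I_W)^k)
   for every k. *)

Section MonomialIdeals.
Variables (K : fieldType) (n : nat).
Local Notation R := {mpoly K[n]}.
Local Notation mnm := 'X_{1..n}.

Implicit Types (D E : mnm -> Prop) (I J P : R -> Prop) (p q f g : R) (a b c m : mnm).

Definition monideal D : R -> Prop := fun p => forall m, m \in msupp p -> D m.

Definition upward D : Prop := forall m m', (m <= m')%MM -> D m -> D m'.

Definition upset (G : mnm -> Prop) : mnm -> Prop :=
  fun c => exists2 m, G m & (m <= c)%MM.

Definition mshift a D : mnm -> Prop := fun m => D (a + m)%MM.

Definition colon D f : R -> Prop := fun g => monideal D (g * f).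

Lemma upward_upset G : upward (upset G).
Proof. by move=> m m' hm [m0 h1 h2]; exists m0 => //; apply: lepm_trans hm. Qed.

Lemma upward_mshift D a : upward D -> upward (mshift a D).
Proof.
move=> hD m m' /mnm_lepP h; apply: hD; apply/mnm_lepP => i.
by rewrite !mnmDE leq_add2l.
Qed.

Lemma eq_monideal D E p : (forall m, D m <-> E m) -> monideal D p <-> monideal E p.
Proof. by move=> h; split => hp m /hp /h. Qed.

Lemma monideal0 D : monideal D 0.
Proof. by move=> m; rewrite msupp0. Qed.

Lemma monidealX D m : monideal D 'X_[m] <-> D m.
Proof.
split; first by apply; rewrite msuppX mem_seq1.
by move=> Dm m'; rewrite msuppX mem_seq1 => /eqP ->.
Qed.

Lemma monidealD D p q : monideal D p -> monideal D q -> monideal D (p + q).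
Proof. by move=> hp hq m /msuppD_le; rewrite mem_cat => /orP [/hp|/hq]. Qed.

Lemma monidealB D p q : monideal D p -> monideal D q -> monideal D (p - q).
Proof. by move=> hp hq; apply: monidealD => // m; rewrite (perm_mem (msuppN q)) => /hq. Qed.

Lemma monidealM D p q : upward D -> monideal D q -> monideal D (p * q).
Proof.
move=> hD hq m /msuppM_le /allpairsP [[m1 m2] /= [_ h2 ->]].
by apply: (hD m2); [apply: lem_addl | apply: hq].
Qed.

Lemma monidealZ D (x : K) p : monideal D p -> monideal D (x *: p).
Proof. by move=> hp m /msuppZ_le /hp. Qed.

Lemma monideal_sum D (T : eqType) (r : seq T) (F : T -> R) :
  (forall x, x \in r -> monideal D (F x)) -> monideal D (\sum_(x <- r) F x).
Proof.
elim: r => [|x r IH] h; first by rewrite big_nil; apply: monideal0.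
rewrite big_cons; apply: monidealD; first by apply: h; rewrite mem_head.
by apply: IH => y hy; apply: h; rewrite in_cons hy orbT.
Qed.

Lemma monideal_is_ideal D : upward D -> is_ideal (monideal D).
Proof.
move=> hD; split; first exact: monideal0.
by split=> [|p q]; [exact: monidealD | exact: monidealM].
Qed.

Lemma monidealMX D g a : monideal D (g * 'X_[a]) <-> monideal (mshift a D) g.
Proof.
have hperm := perm_mem (msuppMX g a).
split => h m hm; first by apply: h; rewrite hperm; apply/mapP; exists m.
by move: hm; rewrite hperm => /mapP [m' hm' ->]; apply: h.
Qed.

Lemma idealB P p q : is_ideal P -> P p -> P q -> P (p - q).
Proof. by case=> _ [hD hM] hp hq; apply: hD => //; rewrite -mulN1r; apply: hM. Qed.

Lemma ideal_sum P (T : eqType) (r : seq T) (F : T -> R) :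
  is_ideal P -> (forall x, x \in r -> P (F x)) -> P (\sum_(x <- r) F x).
Proof.
case=> h0 [hD _]; elim: r => [|x r IH] h; first by rewrite big_nil.
rewrite big_cons; apply: hD; first by apply: h; rewrite mem_head.
by apply: IH => y hy; apply: h; rewrite in_cons hy orbT.
Qed.

Lemma ideal_monomials P p :
  is_ideal P -> (forall m, m \in msupp p -> P 'X_[m]) -> P p.
Proof.
move=> hP h; rewrite (mpolyE p); apply: ideal_sum => // m hm.
by rewrite -mul_mpolyC; case: hP => _ [_ hM]; apply: hM; apply: h.
Qed.

Lemma ideal_gen_is_ideal (S : R -> Prop) : is_ideal (ideal_gen S).
Proof.
split; first by exists [::]; rewrite big_nil.
split.
  move=> a b [r1 [h1 ->]] [r2 [h2 ->]]; exists (r1 ++ r2); rewrite big_cat.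
  by split => // x; rewrite mem_cat => /orP [/h1|/h2].
move=> a b [r [h ->]]; exists [seq (a * x.1, x.2) | x <- r]; split.
  by move=> x /mapP [y /h hy ->].
by rewrite big_map mulr_sumr; apply: eq_bigr => x _; rewrite mulrA.
Qed.

Lemma ideal_gen_mul (S : R -> Prop) p q : S q -> ideal_gen S (p * q).
Proof.
move=> hq; exists [:: (p, q)]; rewrite big_seq1.
by split => // x; rewrite mem_seq1 => /eqP ->.
Qed.

Lemma ideal_gen_min (S : R -> Prop) J p :
  is_ideal J -> (forall q, S q -> J q) -> ideal_gen S p -> J p.
Proof.
move=> hJ hS [r [hr ->]]; apply: ideal_sum => // x hx.
by case: hJ => _ [_ hM]; apply: hM; apply: hS; apply: hr.
Qed.

Lemma eq_ideal_gen (S S' : R -> Prop) p :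
  (forall q, S q <-> S' q) -> ideal_gen S p <-> ideal_gen S' p.
Proof. by move=> h; split => -[r [hr ->]]; exists r; split => // x /hr /h. Qed.

Lemma ideal_gen_monomials (G : mnm -> Prop) p :
  ideal_gen (fun q => exists m, G m /\ q = 'X_[m]) p <-> monideal (upset G) p.
Proof.
split.
  apply: ideal_gen_min; first exact/monideal_is_ideal/upward_upset.
  by move=> q [m [hm ->]]; apply/monidealX; exists m => //; apply: lepm_refl.
move=> hp; apply: ideal_monomials; first exact: ideal_gen_is_ideal.
move=> m /hp [m0 hm0 hle].
by rewrite -(submK hle) mpolyXD; apply: ideal_gen_mul; exists m0.
Qed.

Definition mtrunc D f : R :=
  \sum_(m <- msupp f | ~~ `[< D m >]) f@_m *: 'X_[m].

Lemma monideal_subr_mtrunc D f : monideal D (f - mtrunc D f).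
Proof.
rewrite /mtrunc {1}(mpolyE f) (bigID (fun m => `[< D m >])) /= addrK -big_filter.
apply: monideal_sum => x; rewrite mem_filter => /andP [/asboolP hx _].
by apply: monidealZ; apply/monidealX.
Qed.

Lemma msupp_mtrunc D f :
  perm_eq (msupp (mtrunc D f)) [seq m <- msupp f | ~~ `[< D m >]].
Proof.
rewrite /mtrunc -big_filter; apply: msupp_sumX; first by rewrite filter_uniq // msupp_uniq.
by move=> m; rewrite mem_filter => /andP [_]; rewrite mcoeff_msupp.
Qed.

Lemma msupp_mtruncP D f m : m \in msupp (mtrunc D f) -> ~ D m.
Proof. by rewrite (perm_mem (msupp_mtrunc D f)) mem_filter => /andP [/asboolP]. Qed.

Lemma size_msupp_mtruncMX {D f u m} : m \in msupp f -> D (u + m)%MM ->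
  (size (msupp (mtrunc D (f * 'X_[u]))) < size (msupp f))%N.
Proof.
move=> hm hDm; rewrite (perm_size (msupp_mtrunc _ _)) size_filter.
rewrite (permP (msuppMX f u)) count_map.
rewrite -(count_predC (preim (fun m => (u + m)%MM) (fun m => ~~ `[< D m >]))).
rewrite -[X in (X < _)%N]addn0 ltn_add2l -has_count.
by apply/hasP; exists m => //=; rewrite negbK; apply/asboolP.
Qed.

Lemma colon_mtrunc D f g : upward D -> colon D (mtrunc D f) g <-> colon D f g.
Proof.
move=> hD; have hd := monideal_subr_mtrunc D f.
have e : g * f = g * mtrunc D f + g * (f - mtrunc D f) by rewrite mulrBr addrC subrK.
rewrite /colon e; split => h; first by apply: monidealD => //; apply: monidealM.
by rewrite -(addrK (g * (f - mtrunc D f)) (g * _)); apply: monidealB => //; apply: monidealM.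
Qed.

Lemma prime_colonMX D P f u : is_prime_ideal P ->
  (forall g, P g <-> colon D f g) -> ~ P 'X_[u] ->
  forall g, P g <-> colon D (f * 'X_[u]) g.
Proof.
move=> [[_ [_ hM]] [_ hpr]] hf hu g.
rewrite /colon mulrA mulrAC -/(colon D f (g * 'X_[u])) -hf.
by split => [/(hM 'X_[u])|/hpr []//]; rewrite mulrC.
Qed.

Lemma colon_mlead D P f : is_ideal P -> f != 0 ->
  (forall g, P g <-> colon D f g) ->
  (forall u, D (u + mlead f)%MM -> P 'X_[u]) ->
  forall g, P g <-> colon D 'X_[mlead f] g.
Proof.
move=> hP fn0 hf hl g; rewrite /colon monidealMX; set l := mlead f.
have hsub g' : monideal (mshift l D) g' -> P g'.
  by move=> h; apply: ideal_monomials => // m /h; rewrite /mshift addmC; apply: hl.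
split=> [hg|]; last exact: hsub.
apply: contrapT => hng; set g' := mtrunc (mshift l D) g.
have hdiff := monideal_subr_mtrunc (mshift l D) g.
have hg' : P g' by rewrite -[g'](subKr g); apply: idealB => //; apply: hsub.
have g'n0 : g' != 0 by apply: contra_notN hng => /eqP g'0; rewrite -[g]subr0 -g'0.
apply: msupp_mtruncP (mlead_supp g'n0) _; rewrite /mshift addmC.
apply: (proj1 (hf g') hg').
by rewrite mcoeff_msupp mleadcM mulf_neq0 ?mleadc_eq0.
Qed.

(* If some x^u with x^(u + mlead f) in J lies outside P, then P = (J : r) for
   the part r of x^u f outside J, whose support is smaller than that of f;
   otherwise P = (J : x^(mlead f)). *)
Lemma prime_colon_monomial D P f : upward D -> is_prime_ideal P ->
  (forall g, P g <-> colon D f g) -> exists a, forall g, P g <-> colon D 'X_[a] g.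
Proof.
move=> hD hP; have [N] := ubnP (size (msupp f)); elim: N f => // N IH f.
rewrite ltnS => hsize hf.
have fn0 : f != 0.
  apply: contra_notN (proj1 (proj2 hP)) => /eqP f0.
  by apply/hf; rewrite /colon f0 mulr0; apply: monideal0.
case: (pselect (exists2 u, D (u + mlead f)%MM & ~ P 'X_[u])) => [[u hu hPu]|hl].
  apply: (IH (mtrunc D (f * 'X_[u]))).
    exact: leq_trans (size_msupp_mtruncMX (mlead_supp fn0) hu) hsize.
  by move=> g; rewrite colon_mtrunc //; apply: prime_colonMX.
exists (mlead f); apply: colon_mlead => //; first by case: hP.
by move=> u hu; apply: contrapT => hPu; apply: hl; exists u.
Qed.

Lemma prime_monideal_var P E : is_prime_ideal P ->
  (forall g, P g <-> monideal E g) -> upward E ->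
  forall m, E m <-> exists2 i, (0 < m i)%N & E U_(i)%MM.
Proof.
move=> [_ [hP1 hpr]] hE hU m; split; last first.
  by move=> [i hi hEi]; apply: (hU U_(i)%MM) => //; rewrite lep1mP -lt0n.
have [N] := ubnP (mdeg m); elim: N m => // N IH m; rewrite ltnS => hdeg Em.
case: (pickP (fun i => m i != 0%N)) => [i hi|hm0]; last first.
  have m0 : m = 0%MM by apply/mnmP => i; apply/eqP; rewrite mnm0E; move/negbFE: (hm0 i).
  by case: hP1; rewrite -mpolyX0; apply/hE/monidealX; rewrite -m0.
have hm : m = (U_(i) + (m - U_(i)))%MM by rewrite addmC submK // lep1mP.
have : P ('X_[U_(i)] * 'X_[m - U_(i)]) by rewrite -mpolyXD -hm; apply/hE/monidealX.
case/hpr => /hE /monidealX hEi; first by exists i; rewrite // lt0n.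
have [|j hj hEj] := IH _ _ hEi; first by move: hdeg; rewrite {1}hm mdegD mdeg1 add1n.
by exists j => //; apply: leq_trans hj _; rewrite {2}hm mnmDE leq_addl.
Qed.

Lemma prime_monideal_invariant P E (phi : mnm -> mnm) : is_prime_ideal P ->
  (forall g, P g <-> monideal E g) -> upward E ->
  (forall m i, E U_(i)%MM -> (0 < phi m i)%N = (0 < m i)%N) ->
  forall m, E (phi m) <-> E m.
Proof.
move=> hP hE hU hphi m; rewrite !(prime_monideal_var P E hP hE hU).
by split=> -[i hi hEi]; exists i; rewrite // ?hphi // -hphi.
Qed.

Lemma eq_Ass J J' P : (forall p, J p <-> J' p) -> Ass J P <-> Ass J' P.
Proof. by move=> h; split=> -[hP [f hf]]; split=> //; exists f => g; rewrite hf h. Qed.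

Lemma eq_ideal_pow J J' k p :
  (forall q, J q <-> J' q) -> ideal_pow J k p <-> ideal_pow J' k p.
Proof.
move=> h; apply: eq_ideal_gen => q.
by split=> -[s [hs [hJ ->]]]; exists s; split => //; split => // x /hJ /h.
Qed.

Fixpoint msetpow D k : mnm -> Prop :=
  if k is k'.+1 then
    fun c => exists m1 m2, [/\ D m1, msetpow D k' m2 & (m1 + m2 <= c)%MM]
  else fun _ => True.

Lemma upward_msetpow D k : upward (msetpow D k).
Proof.
case: k => [//|k] m m' hle [m1 [m2 [h1 h2 h3]]].
by exists m1, m2; split => //; apply: lepm_trans hle.
Qed.

Lemma monideal_prod D (s : seq R) : (forall q, q \in s -> monideal D q) ->
  monideal (msetpow D (size s)) (\prod_(q <- s) q).
Proof.
elim: s => [|q s IH] hs; first by rewrite big_nil -mpolyX0; apply/monidealX.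
rewrite big_cons => m /msuppM_le /allpairsP [[m1 m2] /= [h1 h2 ->]].
exists m1, m2; split; last exact: lepm_refl.
  by apply: (hs q) => //; rewrite mem_head.
by apply: IH => // x hx; apply: hs; rewrite in_cons hx orbT.
Qed.

Lemma msetpow_prod D k c : msetpow D k c -> exists s r, [/\ size s = k,
  forall q, q \in s -> monideal D q & 'X_[c] = r * \prod_(q <- s) q].
Proof.
elim: k c => [|k IH] c.
  by move=> _; exists [::], 'X_[c]; split => //; rewrite big_nil mulr1.
move=> [m1 [m2 [h1 /IH [s [r [hs1 hs2 hr]]] hle]]].
exists ('X_[m1] :: s), ('X_[c - (m1 + m2)] * r); split.
- by rewrite /= hs1.
- by move=> q; rewrite in_cons => /orP [/eqP ->|/hs2 //]; apply/monidealX.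
rewrite big_cons -[in LHS](submK hle) !mpolyXD hr -!mulrA; congr (_ * _).
exact: mulrCA.
Qed.

Lemma ideal_pow_monideal D k p :
  ideal_pow (monideal D) k p <-> monideal (msetpow D k) p.
Proof.
split.
  apply: ideal_gen_min; first exact/monideal_is_ideal/upward_msetpow.
  by move=> q [s [<- [hs ->]]]; apply: monideal_prod.
move=> hp; apply: ideal_monomials; first exact: ideal_gen_is_ideal.
move=> m /hp /msetpow_prod [s [r [hs1 hs2 ->]]].
by apply: ideal_gen_mul; exists s.
Qed.

Definition expset (I : R -> Prop) : mnm -> Prop := upset (fun m => I 'X_[m]).

Lemma monomial_idealE I p : monomial_ideal I -> I p <-> monideal (expset I) p.
Proof.
move=> hI; rewrite hI /expset -ideal_gen_monomials; apply: eq_ideal_gen => q.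
by split=> /= [[hq [m e]]|[m [hm ->]]]; [exists m; rewrite -e | split=> //; exists m].
Qed.

Lemma lepm_mdeg_eq m m' : (m' <= m)%MM -> (mdeg m <= mdeg m')%N -> m' = m.
Proof.
move=> hle; rewrite -(submK hle) mdegD => hdeg.
have /eqP : mdeg (m - m') = 0%N by lia.
by rewrite mdeg_eq0 => /eqP ->; rewrite add0m.
Qed.

Lemma min_mon_gen_exists I m0 : I 'X_[m0] ->
  exists2 m, min_mon_gen I m & (m <= m0)%MM.
Proof.
move=> hm0.
have hex : exists d, `[< exists2 m, I 'X_[m] /\ (m <= m0)%MM & mdeg m = d >].
  by exists (mdeg m0); apply/asboolP; exists m0 => //; split => //; apply: lepm_refl.
case: (ex_minnP hex) => _ /asboolP [m [hm hle] <-] hmin.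
exists m => //; split => // m' hm' /mnm_lepP hle'; apply: lepm_mdeg_eq => //.
by apply: hmin; apply/asboolP; exists m'; split => //; apply: lepm_trans hle.
Qed.

Section Weight.
Variable W : 'I_n -> nat.
Hypothesis W_gt0 : forall i, (0 < W i)%N.

Definition wdiv c : mnm := [multinom (c i %/ W i)%N | i < n].
Definition wmul m : mnm := [multinom (W i * m i)%N | i < n].
Definition wpreim D : mnm -> Prop := fun c => D (wdiv c).

Lemma wdiv_wmul m : wdiv (wmul m) = m.
Proof. by apply/mnmP => i; rewrite !mnmE mulKn. Qed.

Lemma wdiv_wmulD a c : wdiv (wmul a + c) = (a + wdiv c)%MM.
Proof. by apply/mnmP => i; rewrite !(mnmDE, mnmE) mulnC divnMDl. Qed.

Lemma lepm_wdiv m c : (m <= wdiv c)%MM = (wmul m <= c)%MM.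
Proof.
by apply/mnm_lepP/mnm_lepP => h i; move: (h i); rewrite !mnmE leq_divRL // mulnC.
Qed.

Lemma upward_wpreim D : upward D -> upward (wpreim D).
Proof.
move=> hD m m' /mnm_lepP h; apply: hD; apply/mnm_lepP => i.
by rewrite !mnmE leq_div2r.
Qed.

Lemma colon_wpreim D P a : upward D -> is_prime_ideal P ->
  (forall g, P g <-> colon D 'X_[a] g) ->
  exists b, forall g, P g <-> colon (wpreim D) 'X_[b] g.
Proof.
move=> hD hP ha; set E := mshift a D.
have hE g : P g <-> monideal E g by rewrite ha /colon monidealMX.
set e : mnm := [multinom if `[< E U_(i)%MM >] then (W i).-1 else 0%N | i < n].
exists (wmul a + e)%MM => g; rewrite hE /colon monidealMX; apply: eq_monideal => m.
rewrite /mshift /wpreim -addmA wdiv_wmulD; symmetry.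
apply: (prime_monideal_invariant P E (fun m => wdiv (e + m)) hP hE (upward_mshift D a hD)).
move=> {}m i hEi; rewrite !(mnmE, mnmDE) asboolT // divn_gt0 //.
by have := W_gt0 i; lia.
Qed.

Lemma colon_wpreimV D P b : upward D -> is_prime_ideal P ->
  (forall g, P g <-> colon (wpreim D) 'X_[b] g) ->
  exists a, forall g, P g <-> colon D 'X_[a] g.
Proof.
move=> hD hP hb; set E := mshift b (wpreim D).
have hE g : P g <-> monideal E g by rewrite hb /colon monidealMX.
exists (wdiv b) => g; rewrite hE /colon monidealMX; apply: eq_monideal => m.
have -> : mshift (wdiv b) D m = E (wmul m).
  by rewrite /E /mshift /wpreim [(b + _)%MM]addmC wdiv_wmulD addmC.
symmetry; apply: (prime_monideal_invariant P E wmul hP hE).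
  exact: upward_mshift _ b (upward_wpreim D hD).
by move=> {}m i _; rewrite mnmE muln_gt0 W_gt0.
Qed.

Lemma Ass_monideal_wpreim D P : upward D ->
  Ass (monideal D) P <-> Ass (monideal (wpreim D)) P.
Proof.
move=> hD; split=> -[hP [f hf]]; split=> //.
  have [a ha] := prime_colon_monomial D P f hD hP hf.
  by have [b hb] := colon_wpreim D P a hD hP ha; exists 'X_[b].
have [b hb] := prime_colon_monomial _ P f (upward_wpreim D hD) hP hf.
by have [a ha] := colon_wpreimV D P b hD hP hb; exists 'X_[a].
Qed.

Lemma msetpow_wpreim D k c : msetpow (wpreim D) k c <-> wpreim (msetpow D k) c.
Proof.
elim: k c => [//|k IH] c; split.
  move=> [m1 [m2 [h1 /IH h2 /mnm_lepP hle]]]; exists (wdiv m1), (wdiv m2); split => //.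
  apply/mnm_lepP => i; move: (hle i); rewrite !(mnmDE, mnmE) => /(leq_div2r (W i)).
  by apply: leq_trans; rewrite leq_divRL // mulnDl leq_add // leq_divM.
move=> [m1 [m2 [h1 h2 hle]]]; exists (wmul m1), (wmul m2); split.
- by rewrite /wpreim wdiv_wmul.
- by apply/IH; rewrite /wpreim wdiv_wmul.
apply: lepm_trans (_ : wmul (m1 + m2) <= c)%MM; last by rewrite -lepm_wdiv.
by apply/mnm_lepP => i; rewrite !(mnmDE, mnmE) mulnDr.
Qed.

Lemma weight_homX m : weight_hom W ('X_[m] : R) = 'X_[wmul m].
Proof.
rewrite /weight_hom comp_mpolyX [in RHS]mpolyXE_id; apply: eq_bigr => i _.
by rewrite tnth_mktuple mnmE exprM.
Qed.

Lemma weighted_idealE I p : weighted_ideal W I p <-> monideal (wpreim (expset I)) p.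
Proof.
have hS q : (exists m, min_mon_gen I m /\ q = weight_hom W 'X_[m]) <->
    exists c, (exists2 m, min_mon_gen I m & c = wmul m) /\ q = 'X_[c].
  split=> [[m [hm ->]]|[_ [[m hm ->] ->]]]; last by exists m; rewrite weight_homX.
  by exists (wmul m); rewrite weight_homX; split => //; exists m.
rewrite /weighted_ideal (eq_ideal_gen _ _ _ hS) ideal_gen_monomials.
apply: eq_monideal => c; split=> [[_ [m [hm _] ->] hle]|[m0 hm0 hle]].
  by exists m; rewrite // lepm_wdiv.
have [m hm hmm] := min_mon_gen_exists I m0 hm0.
by exists (wmul m); [exists m | rewrite -lepm_wdiv; apply: lepm_trans hle].
Qed.

Lemma Ass_ideal_pow_weighted I k P : monomial_ideal I ->
  Ass (ideal_pow I k) P <-> Ass (ideal_pow (weighted_ideal W I) k) P.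
Proof.
move=> hI.
have hIk p : ideal_pow I k p <-> monideal (msetpow (expset I) k) p.
  by rewrite (eq_ideal_pow _ _ k p (fun q => monomial_idealE I q hI)) ideal_pow_monideal.
have hIWk p : ideal_pow (weighted_ideal W I) k p <->
    monideal (wpreim (msetpow (expset I) k)) p.
  rewrite (eq_ideal_pow _ _ k p (weighted_idealE I)) ideal_pow_monideal.
  by apply: eq_monideal => c; apply: msetpow_wpreim.
rewrite (eq_Ass _ _ P hIk) (eq_Ass _ _ P hIWk).
exact/Ass_monideal_wpreim/upward_msetpow.
Qed.

End Weight.
End MonomialIdeals.

Theorem theorem3p14 (K : fieldType) (n : nat) (I : {mpoly K[n]} -> Prop)
  (W : 'I_n -> nat) :
  monomial_ideal I -> (forall i, (0 < W i)%N) ->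
  (copersistent I <-> copersistent (weighted_ideal W I)).
Proof.
move=> hI hW.
have hAss k P := Ass_ideal_pow_weighted K n W hW I k P hI.
by split=> hcop k hk P /hAss /(hcop k hk) /hAss.
Qed.
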